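(* Let $n\ge3$, let $S=(s_{ij})$ be an $n\times n$ magic square, and let $P=\{(x_{ij},y_{ij},z_{ij})\}$ with $x_{ij}=j-\frac{n-1}{2}$, $y_{ij}=\frac{n-1}{2}-i$, $z_{ij}=s_{ij}-\frac{n^2+1}{2}$. For $\epsilon=(\epsilon_{ij})\in\mathbb R^{n\times n}$ let $\tilde P$ be obtained by replacing $z_{ij}$ with $\tilde z_{ij}=z_{ij}+\epsilon_{ij}$, and set $\Phi(\tilde P)=\mathrm{Cov}(X,\tilde Z)^2+\mathrm{Cov}(Y,\tilde Z)^2$. Then $\Phi(P)=0$, and for generic perturbations $\epsilon$ (i.e. for all $\epsilon$ outside a Lebesgue-null subset of $\mathbb R^{n\times n}$), $\Phi(\tilde P)>0$.
   Context: A magic square of order $n$ is an arrangement of $1,\dots,n^2$ (each once) in an $n\times n$ grid with every row, column, and both main diagonals summing to $n(n^2+1)/2$. $X,Y,\tilde Z$ are the functions $(i,j)\mapsto x_{ij},y_{ij},\tilde z_{ij}$ regarded as random variables under the uniform distribution on cells, with $\mathrm{Cov}(F,G)=\frac1{n^2}\sum_{i,j}(F(i,j)-\bar F)(G(i,j)-\bar G)$. *)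

From mathcomp Require Import all_boot all_order all_algebra.
From mathcomp Require Import reals.
Set Implicit Arguments. Unset Strict Implicit. Unset Printing Implicit Defensive.
Import Order.TTheory GRing.Theory Num.Theory.
Local Open Scope ring_scope.

(* A magic square of order n: the entries (i,j) ↦ s i j (0-based indices)
   are exactly 1..n^2, each once (injective with values in [1, n^2], n^2 cells),
   and every row, column and both main diagonals sum to n(n^2+1)/2. *)
Definition is_magic_square (n : nat) (s : 'I_n -> 'I_n -> nat) : Prop :=
  [/\ (forall i j, (1 <= s i j <= n ^ 2)%N),
      (forall i j i' j', s i j = s i' j' -> i = i' /\ j = j')
    & [/\ (forall i, (\sum_(j < n) s i j = (n * (n ^ 2 + 1)) %/ 2)%N),
      (forall j, (\sum_(i < n) s i j = (n * (n ^ 2 + 1)) %/ 2)%N),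
      (\sum_(i < n) s i i = (n * (n ^ 2 + 1)) %/ 2)%N
    & (\sum_(i < n) s i (rev_ord i) = (n * (n ^ 2 + 1)) %/ 2)%N]].

Section Pts.
Variable R : realType.
Variable n : nat.

Definition xc (i j : 'I_n) : R := (j%:R) - (n%:R - 1) / 2.
Definition yc (i j : 'I_n) : R := (n%:R - 1) / 2 - i%:R.
Definition zc (s : 'I_n -> 'I_n -> nat) (i j : 'I_n) : R :=
  (s i j)%:R - ((n ^ 2)%:R + 1) / 2.

Definition mean (F : 'I_n -> 'I_n -> R) : R :=
  (n%:R ^+ 2)^-1 * \sum_(i < n) \sum_(j < n) F i j.
Definition cov (F G : 'I_n -> 'I_n -> R) : R :=
  (n%:R ^+ 2)^-1 *
    \sum_(i < n) \sum_(j < n) (F i j - mean F) * (G i j - mean G).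

Definition zpert (s : 'I_n -> 'I_n -> nat) (eps : 'M[R]_n) (i j : 'I_n) : R :=
  zc s i j + eps i j.
Definition Phi (s : 'I_n -> 'I_n -> nat) (eps : 'M[R]_n) : R :=
  cov xc (zpert s eps) ^+ 2 + cov yc (zpert s eps) ^+ 2.

Definition box_vol (a b : 'M[R]_n) : R := \prod_(i < n) \prod_(j < n) (b i j - a i j).
Definition in_box (a b x : 'M[R]_n) : Prop :=
  forall i j, a i j <= x i j <= b i j.
Definition lebesgue_null (A : 'M[R]_n -> Prop) : Prop :=
  forall e : R, 0 < e ->
    exists a b : nat -> 'M[R]_n,
      [/\ (forall k i j, a k i j <= b k i j),
          (forall x, A x -> exists k, in_box (a k) (b k) x)
        & (forall N, \sum_(k < N) box_vol (a k) (b k) <= e)].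
End Pts.

(* Every row and column of a magic square sums to n(n^2+1)/2, so the heights
   z have zero row and column sums; as X is constant on columns and Y on rows,
   both covariances with Z vanish and Phi(P) = 0.  After perturbation,
   Cov(X, Z~) = Cov(X, eps) is a linear form in eps that is nonzero because X
   is not constant (n >= 2), so Phi(P~) = 0 confines eps to a hyperplane.  A
   hyperplane is the graph of a Lipschitz function of all coordinates but one:
   over a grid of K^(n^2-1) cells of side h in the other coordinates it lies in
   boxes of height O(h), of total volume O(1/K) on each bounded piece, and a
   countable union of null sets is null. *)

From mathcomp Require Import all_boot all_order all_algebra.
From mathcomp Require Import reals boolp.
From mathcomp.algebra_tactics Require Import ring lra.
From mathcomp Require Import zify.
Set Implicit Arguments. Unset Strict Implicit. Unset Printing Implicit Defensive.
Import Order.TTheory GRing.Theory Num.Theory.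
Local Open Scope ring_scope.

Definition pairn (lr : nat * nat) : nat := (2 ^ lr.1 * lr.2.*2.+1).-1.
Definition unpairn (k : nat) : nat * nat :=
  (logn 2 k.+1, (k.+1 %/ 2 ^ logn 2 k.+1)./2).

Lemma unpairnK : cancel unpairn pairn.
Proof.
move=> k; have [m m_odd km] := pfactor_coprime (p := 2) isT (ltn0Sn k).
rewrite coprime2n in m_odd.
rewrite /pairn /unpairn /= [X in (X %/ _)%N]km mulnK ?expn_gt0 //.
have -> : (m./2.*2.+1 = m)%N by rewrite -[RHS]odd_double_half m_odd.
by rewrite mulnC -km.
Qed.

Lemma pairnK : cancel pairn unpairn.
Proof.
case=> l r; rewrite /pairn /unpairn /=.
have pos : (0 < 2 ^ l * r.*2.+1)%N by rewrite muln_gt0 expn_gt0.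
have -> : logn 2 (2 ^ l * r.*2.+1).-1.+1 = l.
  rewrite prednK // lognM ?expn_gt0 // pfactorK // logn_coprime ?addn0 //.
  by rewrite coprime2n /= odd_double.
by rewrite prednK // mulKn ?expn_gt0 // -add1n (half_bit_double r true).
Qed.

Lemma unpairn_leq k : ((unpairn k).1 <= k)%N /\ ((unpairn k).2 <= k)%N.
Proof.
have := unpairnK k; rewrite /pairn; case: (unpairn k) => l r /= kE.
have l_lt := ltn_expl l (ltnSn 1).
have e_gt0 : (0 < 2 ^ l)%N by rewrite expn_gt0.
split; nia.
Qed.

Section NonnegSums.
Variable R : numDomainType.

Lemma ler_sum_inj (I J : finType) (h : I -> J) (F : J -> R) :
  injective h -> (forall j, 0 <= F j) -> \sum_i F (h i) <= \sum_j F j.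
Proof.
move=> h_inj F_ge0; rewrite -(big_imset F (in2W h_inj)) /=.
by rewrite [leRHS](bigID (mem (h @: predT))) /= lerDl sumr_ge0.
Qed.

Lemma ler_sum_support (F : nat -> R) (M N : nat) :
  (forall k, 0 <= F k) -> (forall k, (M <= k)%N -> F k = 0) ->
  \sum_(k < N) F k <= \sum_(k < M) F k.
Proof.
move=> F_ge0 F0; rewrite -!(big_mkord xpredT).
apply: (@le_trans _ _ (\sum_(0 <= k < M + N) F k)).
  by rewrite (big_cat_nat _ (leq_addl M N)) //= lerDl sumr_ge0.
rewrite (big_cat_nat _ (leq_addr N M)) //= [X in _ + X]big_nat_cond.
rewrite [X in _ + X]big1 ?addr0 //.
by move=> k /andP[/andP[Mk _] _]; apply: F0.
Qed.

End NonnegSums.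

Lemma sum_halves_le (R : realFieldType) (e : R) (N : nat) :
  0 <= e -> \sum_(l < N) e / 2 ^+ l.+1 <= e.
Proof.
have -> : \sum_(l < N) e / 2 ^+ l.+1 = e - e / 2 ^+ N.
  elim: N => [|N IH]; first by rewrite big_ord0 expr0 divr1 subrr.
  rewrite big_ord_recr /= IH !exprS.
  have : (2 : R) ^+ N != 0 by rewrite expf_neq0 // pnatr_eq0.
  by move=> ?; field.
by move=> e_ge0; rewrite gerBl divr_ge0 // exprn_ge0.
Qed.

Section NullSets.
Variables (R : realType) (n : nat).
Hypothesis n_gt0 : (0 < n)%N.

Definition box_cover (A : 'M[R]_n -> Prop) (e : R) : Prop :=
  exists a b : nat -> 'M[R]_n,
    [/\ (forall k i j, a k i j <= b k i j),
        (forall x, A x -> exists k, in_box (a k) (b k) x)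
      & (forall N, \sum_(k < N) box_vol (a k) (b k) <= e)].

Lemma box_vol_ge0 (a b : 'M[R]_n) :
  (forall i j, a i j <= b i j) -> 0 <= box_vol a b.
Proof.
by move=> ab; apply: prodr_ge0 => i _; apply: prodr_ge0 => j _; rewrite subr_ge0.
Qed.

Lemma box_vol0 : box_vol (0 : 'M[R]_n) 0 = 0.
Proof.
rewrite /box_vol; case: n n_gt0 => // m _.
by rewrite big_ord_recl big_ord_recl !mxE subrr !mul0r.
Qed.

Lemma box_vol_le_expr (a b : 'M[R]_n) (c : R) :
  (forall i j, 0 <= b i j - a i j <= c) -> box_vol a b <= c ^+ (n * n).
Proof.
move=> abc.
have -> : c ^+ (n * n) = \prod_(i < n) \prod_(j < n) c.
  by rewrite prodr_const prodr_const !card_ord exprM.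
apply: ler_prod => i _; rewrite prodr_ge0 ?ler_prod // => j _.
by have /andP[] := abc i j.
Qed.

Lemma lebesgue_null_sub (A B : 'M[R]_n -> Prop) :
  (forall x, A x -> B x) -> lebesgue_null B -> lebesgue_null A.
Proof.
move=> AB B0 e e_gt0; have [a [b [ab cover vol]]] := B0 e e_gt0.
by exists a, b; split=> // x /AB /cover.
Qed.

Lemma box_cover_fin (T : finType) (a b : T -> 'M[R]_n) (A : 'M[R]_n -> Prop) (e : R) :
  (forall t i j, a t i j <= b t i j) ->
  (forall x, A x -> exists t, in_box (a t) (b t) x) ->
  \sum_t box_vol (a t) (b t) <= e -> box_cover A e.
Proof.
move=> ab cover vol.
pose seq_of (c : T -> 'M[R]_n) k : 'M[R]_n :=
  if insub k : option 'I_#|T| is Some i then c (enum_val i) else 0.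
have seq_ab k i j : seq_of a k i j <= seq_of b k i j.
  by rewrite /seq_of; case: insub => [t|]; rewrite ?mxE.
exists (seq_of a), (seq_of b); split=> // [x /cover[t t_box] | N].
  by exists (enum_rank t); rewrite /seq_of valK enum_rankK.
pose V k := box_vol (seq_of a k) (seq_of b k).
apply: (@le_trans _ _ (\sum_(k < #|T|) V k)); first apply: ler_sum_support.
- by move=> k; apply: box_vol_ge0.
- by move=> k Tk; rewrite /V /seq_of insubF ?box_vol0 // ltnNge Tk.
rewrite big_enum_val /= in vol; apply: le_trans vol; rewrite le_eqVlt; apply/predU1l.
by apply: eq_bigr => i _; rewrite /V /seq_of valK.
Qed.

Lemma lebesgue_null_bigcup (A : 'M[R]_n -> Prop) (B : nat -> 'M[R]_n -> Prop) :
  (forall l, lebesgue_null (B l)) -> (forall x, A x -> exists l, B l x) ->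
  lebesgue_null A.
Proof.
move=> B0 AB e e_gt0.
have el_gt0 l : 0 < e / 2 ^+ l.+1 by rewrite divr_gt0 // exprn_gt0.
have /choice[a /choice[b cover]] := fun l => B0 l _ (el_gt0 l).
exists (fun k => a (unpairn k).1 (unpairn k).2).
exists (fun k => b (unpairn k).1 (unpairn k).2).
split=> [k i j | x /AB[l Blx] | N].
- by have [+ _ _] := cover (unpairn k).1.
- have [_ /(_ x Blx)[r x_box] _] := cover l.
  by exists (pairn (l, r)); rewrite pairnK.
pose V (lr : 'I_N * 'I_N) := box_vol (a lr.1 lr.2) (b lr.1 lr.2).
pose ord_unpairn (k : 'I_N) : 'I_N * 'I_N :=
  (Ordinal (leq_ltn_trans (unpairn_leq k).1 (ltn_ord k)),
   Ordinal (leq_ltn_trans (unpairn_leq k).2 (ltn_ord k))).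
have ord_unpairn_inj : injective ord_unpairn.
  move=> k k' /(congr1 (fun lr => (val lr.1, val lr.2))).
  by rewrite -!surjective_pairing => /(can_inj unpairnK) /val_inj.
have V_ge0 lr : 0 <= V lr.
  by have [ab _ _] := cover lr.1; exact: box_vol_ge0.
apply: (@le_trans _ _ (\sum_lr V lr)); first exact: ler_sum_inj ord_unpairn_inj V_ge0.
rewrite -(pair_big xpredT xpredT (fun l r : 'I_N => box_vol (a l r) (b l r))) /=.
apply: le_trans (sum_halves_le N (ltW e_gt0)).
by apply: ler_sum => l _; have [_ _ ->] := cover (l : nat).
Qed.

End NullSets.

Lemma exists_grid_cell (R : archiRealFieldType) (a h y : R) (K : nat) :
  0 < h -> a <= y <= a + K.+1%:R * h ->
  exists k : 'I_K.+1, a + k%:R * h <= y <= a + k%:R * h + h.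
Proof.
move=> h_gt0 /andP[ay ya].
set t := (y - a) / h; have yE : y = a + t * h by rewrite divfK ?gt_eqF //; ring.
have t_ge0 : 0 <= t by rewrite divr_ge0 ?subr_ge0 // ltW.
have t_le : t <= K.+1%:R by rewrite ler_pdivrMr //; lra.
have [k [k_le_t t_le_k]] : exists k : 'I_K.+1, k%:R <= t /\ t <= k.+1%:R.
  have /andP[tr_le tr_gt] := truncn_itv t_ge0.
  case: (leqP (Num.Def.truncn t) K) => [tr_le_K | K_lt_tr].
    by exists (Ordinal (tr_le_K : (_ < K.+1)%N)); split; rewrite // ltW.
  exists ord_max; split=> //; apply: le_trans tr_le.
  by rewrite ler_nat ltnW.
rewrite -natr1 in t_le_k.
by exists k; rewrite yE; apply/andP; split; nra.
Qed.

Section GraphNull.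
Variables (R : realType) (n : nat) (p : 'I_n * 'I_n) (f : 'M[R]_n -> R) (C : R).
Hypothesis C_ge0 : 0 <= C.
Hypothesis f_lip : forall (x y : 'M[R]_n) (h : R), 0 <= h ->
  (forall q, q != p -> `|x q.1 q.2 - y q.1 q.2| <= h) -> `|f x - f y| <= C * h.

Let n_gt0 : (0 < n)%N := leq_ltn_trans (leq0n p.1) (ltn_ord p.1).

Local Notation off_p := {q : 'I_n * 'I_n | q != p}.

Section Grid.
Variables (r : R) (K : nat).
Hypothesis r_gt0 : 0 < r.

Definition mesh : R := 2 * r / K.+1%:R.

Lemma mesh_gt0 : 0 < mesh.
Proof. by rewrite divr_gt0 ?mulr_gt0. Qed.

Lemma grid_width : - r + K.+1%:R * mesh = r.
Proof. by rewrite /mesh mulrCA divff ?mulr1 ?pnatr_eq0 //; ring. Qed.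

Definition grid_corner (t : {ffun off_p -> 'I_K.+1}) : 'M[R]_n := \matrix_(i, j)
  (- r + (if insub (i, j) : option off_p is Some q then t q : nat else 0%N)%:R * mesh).

(* Coordinate p is not gridded: on the graph it is pinned by [f_lip] to within
   [C * mesh] of the value of [f] at the cell corner. *)
Definition grid_lo t : 'M[R]_n := \matrix_(i, j)
  (if (i, j) == p then f (grid_corner t) - C * mesh else grid_corner t i j).

Definition grid_hi t : 'M[R]_n := \matrix_(i, j)
  (if (i, j) == p then f (grid_corner t) + C * mesh else grid_corner t i j + mesh).

Lemma grid_lo_le_hi t i j : grid_lo t i j <= grid_hi t i j.
Proof.
by have := C_ge0; have := mesh_gt0; rewrite !mxE; case: ifP => _ ? ?; [nra | lra].
Qed.

Lemma grid_box_vol t :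
  box_vol (grid_lo t) (grid_hi t) <= ((1 + 2 * C) * mesh) ^+ (n * n).
Proof.
apply: box_vol_le_expr => i j; have := C_ge0; have := mesh_gt0.
by rewrite !mxE; case: ifP => _ ? ?; apply/andP; split; nra.
Qed.

Lemma grid_total_vol :
  \sum_t box_vol (grid_lo t) (grid_hi t) <= (2 * r * (1 + 2 * C)) ^+ (n * n) / K.+1%:R.
Proof.
apply: le_trans (ler_sum _ (fun t _ => grid_box_vol t)) _.
rewrite sumr_const card_ffun card_ord card_sig cardC1 card_prod !card_ord.
rewrite -[leLHS]mulr_natr natrX.
have -> : (n * n = (n * n).-1.+1)%N by rewrite prednK // muln_gt0 n_gt0.
set M := (n * n).-1; rewrite le_eqVlt; apply/predU1l.
have KM_neq0 : K.+1%:R ^+ M != 0 :> R by rewrite expf_neq0 // pnatr_eq0.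
rewrite /mesh !exprMn !exprVn /= !exprS; field.
by rewrite KM_neq0 andbT addrC natr1 pnatr_eq0.
Qed.

Lemma grid_cover (x : 'M[R]_n) : x p.1 p.2 = f x -> (forall i j, `|x i j| <= r) ->
  exists t, in_box (grid_lo t) (grid_hi t) x.
Proof.
move=> xp x_le.
have cell (q : off_p) : exists k : 'I_K.+1,
    - r + k%:R * mesh <= x (val q).1 (val q).2 <= - r + k%:R * mesh + mesh.
  apply: exists_grid_cell mesh_gt0 _; rewrite grid_width -ler_norml; exact: x_le.
have /fin_all_exists[g g_cell] := cell; exists (finfun g).
have near_corner q : q != p -> let u := grid_corner (finfun g) q.1 q.2 in
    u <= x q.1 q.2 <= u + mesh.
  move=> qp; rewrite mxE -surjective_pairing insubT ffunE.
  exact: g_cell.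
move=> i j; rewrite [grid_lo _ _ _]mxE [grid_hi _ _ _]mxE.
case: eqP => [ijp | /eqP ijp]; last exact: near_corner (i, j) ijp.
have -> : x i j = x p.1 p.2 by rewrite -ijp.
rewrite -ler_distl xp; apply: f_lip; first exact: ltW mesh_gt0.
move=> q /near_corner /andP[lo hi]; rewrite ger0_norm; lra.
Qed.

End Grid.

Lemma graph_box_null (r : R) : 0 < r ->
  lebesgue_null (fun x : 'M[R]_n => x p.1 p.2 = f x /\ forall i j, `|x i j| <= r).
Proof.
move=> r_gt0 e e_gt0; set V := (2 * r * (1 + 2 * C)) ^+ (n * n).
pose K := Num.Def.truncn (V / e).
apply: (box_cover_fin n_gt0 (grid_lo_le_hi (K := K) r_gt0)) => [x [] | ].
  exact: grid_cover.
apply: le_trans (grid_total_vol K r_gt0) _.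
rewrite ler_pdivrMr ?ltr0Sn // [e * _]mulrC -ler_pdivrMr //.
exact: ltW (truncnS_gt _).
Qed.

Lemma graph_null : lebesgue_null (fun x : 'M[R]_n => x p.1 p.2 = f x).
Proof.
pose B l (x : 'M[R]_n) := x p.1 p.2 = f x /\ forall i j, `|x i j| <= l.+1%:R.
apply: (lebesgue_null_bigcup (B := B) (fun l => graph_box_null (ltr0Sn R l))).
move=> x xp; exists (Num.Def.truncn (\sum_i \sum_j `|x i j|)); split=> // i j.
apply: le_trans (ltW (truncnS_gt _)).
rewrite (bigD1 i) //= (bigD1 j) //= -addrA lerDl.
by rewrite addr_ge0 ?sumr_ge0 // => *; rewrite sumr_ge0.
Qed.

End GraphNull.

Lemma hyperplane_null (R : realType) (n : nat) (c : 'I_n -> 'I_n -> R)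
    (i0 j0 : 'I_n) (d : R) :
  c i0 j0 != 0 -> lebesgue_null (fun x : 'M[R]_n => \sum_i \sum_j c i j * x i j = d).
Proof.
move=> c0_neq0; pose p := (i0, j0).
pose rest (x : 'M[R]_n) := \sum_(q | q != p) c q.1 q.2 * x q.1 q.2.
have sumE (x : 'M[R]_n) : \sum_i \sum_j c i j * x i j = c i0 j0 * x i0 j0 + rest x.
  by rewrite pair_big (bigD1 p).
pose C := (\sum_q `|c q.1 q.2|) / `|c i0 j0|.
have C_ge0 : 0 <= C by rewrite divr_ge0 ?sumr_ge0.
pose f (x : 'M[R]_n) := (d - rest x) / c i0 j0.
apply: (lebesgue_null_sub _ (graph_null (p := p) (f := f) C_ge0 _)).
  by move=> x; rewrite /f sumE => <-; field.
move=> x y h h_ge0 near.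
have -> : (d - rest x) / c i0 j0 - (d - rest y) / c i0 j0 = (rest y - rest x) / c i0 j0.
  by field.
rewrite normrM normfV [leRHS]mulrAC ler_pM2r ?invr_gt0 ?normr_gt0 //.
rewrite /rest -sumrB mulr_suml; apply: le_trans (ler_norm_sum _ _ _) _.
apply: (@le_trans _ _ (\sum_(q | q != p) `|c q.1 q.2| * h)).
  apply: ler_sum => q qp; rewrite -mulrBr normrM ler_wpM2l // distrC; exact: near.
by rewrite [leRHS](bigD1 p) //= lerDr mulr_ge0.
Qed.

Section Covariance.
Variables (R : realType) (n : nat).
Hypothesis n_gt0 : (0 < n)%N.
Implicit Types F G H : 'I_n -> 'I_n -> R.

Lemma sum_sub_mean F : \sum_i \sum_j (F i j - mean F) = 0.
Proof.
have n_neq0 : n%:R != 0 :> R by rewrite pnatr_eq0 -lt0n.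
under eq_bigr do rewrite sumrB sumr_const card_ord.
rewrite sumrB sumr_const card_ord /mean -mulrnA -[_ *+ (n * n)]mulr_natr natrM.
by field.
Qed.

Lemma cov_centered F G :
  cov F G = (n%:R ^+ 2)^-1 * \sum_i \sum_j (F i j - mean F) * G i j.
Proof.
rewrite /cov; congr (_ * _).
under eq_bigr do under eq_bigr do rewrite mulrBr.
under eq_bigr do rewrite sumrB -mulr_suml.
by rewrite sumrB -mulr_suml sum_sub_mean mul0r subr0.
Qed.

Lemma covDr F G H : cov F (fun i j => G i j + H i j) = cov F G + cov F H.
Proof.
rewrite !cov_centered -mulrDr -big_split; congr (_ * _).
by apply: eq_bigr => i _; rewrite -big_split; apply: eq_bigr => j _; rewrite mulrDr.
Qed.

Lemma cov_col_eq0 (g : 'I_n -> R) G :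
  (forall j, \sum_i G i j = 0) -> cov (fun _ j => g j) G = 0.
Proof.
move=> G_col0; rewrite cov_centered exchange_big big1 ?mulr0 // => j _.
by rewrite -mulr_sumr G_col0 mulr0.
Qed.

Lemma cov_row_eq0 (g : 'I_n -> R) G :
  (forall i, \sum_j G i j = 0) -> cov (fun i _ => g i) G = 0.
Proof.
move=> G_row0; rewrite cov_centered big1 ?mulr0 // => i _.
by rewrite -mulr_sumr G_row0 mulr0.
Qed.

End Covariance.

Lemma natr_magic_sum (R : numFieldType) (n : nat) :
  ((n * (n ^ 2 + 1)) %/ 2)%:R = n%:R * ((n ^ 2)%:R + 1) / 2 :> R.
Proof.
have even : (2 %| n * (n ^ 2 + 1))%N.
  by rewrite dvdn2 oddM oddD oddX /=; case: (odd n).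
have E : ((n * (n ^ 2 + 1)) %/ 2)%:R * 2 = n%:R * ((n ^ 2)%:R + 1) :> R.
  by rewrite -natrM divnK // natrM natrD.
by rewrite -E mulfK // pnatr_eq0.
Qed.

Lemma sum_centered_magic (R : numFieldType) (n : nat) (u : 'I_n -> nat) :
  (\sum_k u k)%N = ((n * (n ^ 2 + 1)) %/ 2)%N ->
  \sum_k ((u k)%:R - ((n ^ 2)%:R + 1) / 2) = 0 :> R.
Proof.
move=> uE; rewrite sumrB -natr_sum uE natr_magic_sum sumr_const card_ord -mulr_natl.
by field.
Qed.

Lemma exists_xc_neq_mean (R : realType) (n : nat) :
  (1 < n)%N -> exists i j : 'I_n, xc R i j != mean (@xc R n).
Proof.
move=> n_gt1; pose i0 : 'I_n := Ordinal (ltnW n_gt1); pose j1 : 'I_n := Ordinal n_gt1.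
case: (eqVneq (xc R i0 i0) (mean (@xc R n))) => [x0E | ]; last by exists i0, i0.
by exists i0, j1; rewrite -x0E /xc (inj_eq (addIr _)) eqr_nat.
Qed.

Section MagicSquare.
Variables (R : realType) (n : nat) (s : 'I_n -> 'I_n -> nat).
Hypothesis n_gt0 : (0 < n)%N.
Hypothesis rows : forall i, (\sum_(j < n) s i j = (n * (n ^ 2 + 1)) %/ 2)%N.
Hypothesis cols : forall j, (\sum_(i < n) s i j = (n * (n ^ 2 + 1)) %/ 2)%N.

Lemma cov_xc_zc : cov (@xc R n) (zc R s) = 0.
Proof.
exact: (cov_col_eq0 n_gt0 (fun j : 'I_n => j%:R - (n%:R - 1) / 2))
  (fun j => sum_centered_magic R (cols j)).
Qed.

Lemma cov_yc_zc : cov (@yc R n) (zc R s) = 0.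
Proof.
exact: (cov_row_eq0 n_gt0 (fun i : 'I_n => (n%:R - 1) / 2 - i%:R))
  (fun i => sum_centered_magic R (rows i)).
Qed.

Lemma zpert0 : zpert s 0 = zc R s.
Proof. by apply/funext => i; apply/funext => j; rewrite /zpert mxE addr0. Qed.

Lemma cov_xc_zpert (eps : 'M[R]_n) : cov (@xc R n) (zpert s eps) =
  (n%:R ^+ 2)^-1 * \sum_i \sum_j (xc R i j - mean (@xc R n)) * eps i j.
Proof. by rewrite covDr // cov_xc_zc add0r cov_centered. Qed.

End MagicSquare.

Theorem mainTheorem6 (R : realType) (n : nat) (s : 'I_n -> 'I_n -> nat) :
  (3 <= n)%N -> is_magic_square s ->
  Phi s (0 : 'M[R]_n) = 0 /\
  lebesgue_null (fun eps : 'M[R]_n => ~ (0 < Phi s eps)).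
Proof.
move=> n_ge3 [_ _ [rows cols _ _]]; have n_gt0 : (0 < n)%N by apply: leq_trans n_ge3.
split; first by rewrite /Phi zpert0 cov_xc_zc // cov_yc_zc // expr0n addr0.
have [i0 [j0 x_neq_mean]] := exists_xc_neq_mean R (leq_trans (isT : 1 < 3)%N n_ge3).
rewrite -subr_eq0 in x_neq_mean.
pose c (i j : 'I_n) := xc R i j - mean (@xc R n).
apply: (lebesgue_null_sub _ (hyperplane_null (c := c) 0 x_neq_mean)) => eps /negP.
rewrite -leNgt /Phi => Phi_le0.
have cov_eq0 : cov (@xc R n) (zpert s eps) = 0.
  apply/eqP; rewrite -sqrf_eq0 eq_le sqr_ge0 andbT.
  by have := sqr_ge0 (cov (@yc R n) (zpert s eps)); lra.
move: cov_eq0; rewrite cov_xc_zpert // => /eqP.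
by rewrite mulf_eq0 invr_eq0 expf_eq0 pnatr_eq0 gtn_eqF // andbF => /eqP.
Qed.
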